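(* The class of majority functions is exactly learnable under the uniform distribution on $\{-1,1\}^n$.
   Context: For $I\subseteq[n]$ with $|I|$ odd, the majority function $\mathrm{maj}_I:\{-1,1\}^n\to\{-1,1\}$ is $\mathrm{maj}_I(x)=\mathrm{sgn}\left(\sum_{i\in I}x_i\right)$. Exact learnability under a distribution means: there is an algorithm which, for every $n$, every target majority $c$ and every $\delta>0$, given a number of i.i.d. examples from the distribution labelled by $c$ that is polynomial in $n$ and $1/\delta$, outputs with probability at least $1-\delta$ a hypothesis equal to $c$ on all of $\{-1,1\}^n$. *)

From Stdlib Require Import Reals.
From mathcomp Require Import all_boot all_order all_algebra.
Set Implicit Arguments. Unset Strict Implicit. Unset Printing Implicit Defensive.
Import GRing.Theory Num.Theory.

(* The cube {-1,1}^n: a point is a finite function 'I_n -> bool,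
   where true encodes +1 and false encodes -1. *)
Definition cube (n : nat) : finType := {ffun 'I_n -> bool}.

Definition pm (b : bool) : int := if b then 1%R else (-1)%R.

(* maj_I(x) = sgn(sum_{i in I} x_i), valued in {-1,0,1} in int
   (never 0 when |I| is odd). *)
Definition maj (n : nat) (I : {set 'I_n}) (x : cube n) : int :=
  Num.sg (\sum_(i in I) pm (x i))%R.

Definition learner := forall n : nat, R -> seq (cube n * int) -> (cube n -> int).

(* Probability, over m i.i.d. uniform examples from {-1,1}^n labelled by
   maj_I, that the hypothesis output by [A] equals maj_I on all of {-1,1}^n. *)
Definition success_prob (n : nat) (I : {set 'I_n}) (m : nat)
  (A : seq (cube n * int) -> (cube n -> int)) : R :=
  Rdiv (INR #|[set xs : m.-tuple (cube n) |
           [forall x : cube n, A [seq (y, maj I y) | y <- xs] x == maj I x]]|)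
       (INR #|{: m.-tuple (cube n)}|).

Definition poly_sample_size (m : nat -> R -> nat) : Prop :=
  exists (c k : nat), forall (n : nat) (delta : R), Rlt R0 delta ->
    Rle (INR (m n delta)) (Rmult (Rmult (INR c) (pow (Rplus (INR n) R1) k)) (pow (Rplus R1 (Rinv delta)) k)).

Definition majorities_exactly_learnable_uniform : Prop :=
  exists (m : nat -> R -> nat) (L : learner),
    poly_sample_size m /\
    forall (n : nat) (I : {set 'I_n}), odd #|I| ->
    forall delta : R, Rlt R0 delta ->
      Rle (Rminus R1 delta) (success_prob I (m n delta) (L n delta)).

From Stdlib Require Import Reals Lra Lia.
From mathcomp Require Import all_boot all_order all_algebra perm zify.
Set Implicit Arguments. Unset Strict Implicit. Unset Printing Implicit Defensive.
Import GRing.Theory Num.Theory.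

(* A wrong odd majority maj_J disagrees with maj_I on at least a 1/(2n)
   fraction of the cube. Flipping the coordinates of I one at a time negates
   maj_I, so the pivotal sets of maj_I at the coordinates of I cover the cube;
   by symmetry they all have the same size; and for i in I \ J every pivotal
   point of maj_I at i lies in the disagreement set of maj_I and maj_J or in
   its image under flipping i. Hence maj_J is consistent with m = 2n(n+L)
   uniform examples with probability at most (1 - 1/(2n))^m <= 2^-(n+L), and a
   union bound over the 2^n candidates shows that the learner outputting any
   consistent odd majority fails with probability at most 2^-L <= 1/L <= delta. *)

Section Cube.
Variable n : nat.
Implicit Types (I J : {set 'I_n}) (x : cube n) (i j : 'I_n).

Lemma card_cube : #|cube n| = 2 ^ n.
Proof. by rewrite card_ffun card_bool card_ord. Qed.

Lemma card_subsets : #|{set 'I_n}| = 2 ^ n.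
Proof. by rewrite -cardsT -powersetT card_powerset cardsT card_ord. Qed.

Lemma card_subset_ord I : #|I| <= n.
Proof. by rewrite -[leqRHS]card_ord max_card. Qed.

Definition flip i x : cube n := [ffun j => if j == i then ~~ x j else x j].

Lemma flipK i : involutive (flip i).
Proof. by move=> x; apply/ffunP=> j; rewrite !ffunE; case: (j == i); rewrite ?negbK. Qed.

Lemma flip_inj i : injective (flip i).
Proof. exact: inv_inj (flipK i). Qed.

Lemma card_setU_preflip (A B : {set cube n}) i :
  #|A :|: flip i @^-1: B| <= #|A| + #|B|.
Proof. by rewrite -(card_preimset B (@flip_inj i)) leq_card_setU. Qed.

Definition flips (s : seq 'I_n) x : cube n := foldl (fun y i => flip i y) x s.

Lemma flipsE s x j : uniq s -> flips s x j = if j \in s then ~~ x j else x j.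
Proof.
elim: s x => [|a s IH] x //= /andP[aNs us].
rewrite IH // in_cons ffunE; case: eqP => [->|_] //=.
by rewrite (negbTE aNs).
Qed.

Section Pivotal.
Variable T : eqType.
Implicit Types f g : cube n -> T.

Definition pivotal f i := [set x | f x != f (flip i x)].

Definition disagree f g := [set x | f x != g x].

Lemma disagreeC f g : disagree f g = disagree g f.
Proof. by apply/setP=> x; rewrite !inE eq_sym. Qed.

Lemma card_disagree_flips_le f s :
  #|disagree f (f \o flips s)| <= \sum_(i <- s) #|pivotal f i|.
Proof.
elim: s => [|a s IH].
  by rewrite big_nil leqn0 cards_eq0; apply/eqP/setP=> x; rewrite !inE eqxx.
rewrite big_cons.
apply: (@leq_trans #|pivotal f a :|: flip a @^-1: disagree f (f \o flips s)|).
  apply/subset_leq_card/subsetP=> x; rewrite !inE /= => fx.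
  by case: (eqVneq (f x) (f (flip a x))) fx => // ->.
by apply: leq_trans (card_setU_preflip _ _ a) _; rewrite leq_add2l.
Qed.

Lemma card_pivotal_le_disagree f g i :
  (forall x, g (flip i x) = g x) -> #|pivotal f i| <= 2 * #|disagree f g|.
Proof.
move=> gi; rewrite mul2n -addnn; apply: leq_trans (card_setU_preflip _ _ i).
apply/subset_leq_card/subsetP=> x; rewrite !inE gi => fx.
by case: (eqVneq (f x) (g x)) fx => // ->; rewrite eq_sym.
Qed.

Definition permx (s : {perm 'I_n}) x : cube n := [ffun j => x (s j)].

Lemma permx_inj s : injective (permx s).
Proof.
apply: (can_inj (g := permx s^-1)) => x.
by apply/ffunP=> j; rewrite !ffunE permKV.
Qed.

Lemma flip_permx s i x : flip i (permx s x) = permx s (flip (s i) x).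
Proof. by apply/ffunP=> j; rewrite !ffunE (inj_eq perm_inj). Qed.

Lemma card_pivotal_perm f s i :
  (forall x, f (permx s x) = f x) -> #|pivotal f (s i)| = #|pivotal f i|.
Proof.
move=> fs; rewrite -[RHS](card_preimset _ (@permx_inj s)); apply: eq_card => x.
by rewrite !inE flip_permx !fs.
Qed.

End Pivotal.

Lemma pmN b : pm (~~ b) = (- pm b)%R.
Proof. by case: b. Qed.

Lemma sum_pm_neq0 I x : odd #|I| -> (\sum_(j in I) pm (x j))%R != 0%R.
Proof.
move=> oI; have -> : (\sum_(j in I) pm (x j) =
    #|I|%:R - (2 * \sum_(j in I) (~~ x j : nat))%:R :> int)%R.
  rewrite -sum1_card natrM !natr_sum mulr_sumr -sumrB.
  by apply: eq_bigr => j _; case: (x j).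
rewrite subr_eq0 eqr_nat; apply: contraL oI => /eqP->.
by rewrite oddM.
Qed.

Lemma maj_neq0 I x : odd #|I| -> maj I x != 0%R.
Proof. by move=> oI; rewrite sgr_eq0 sum_pm_neq0. Qed.

Lemma maj_flip_notin I i x : i \notin I -> maj I (flip i x) = maj I x.
Proof.
move=> iI; congr Num.sg; apply: eq_bigr => j jI; rewrite ffunE.
by case: eqP => // eji; rewrite -eji jI in iI.
Qed.

Lemma maj_flips_enum I x : maj I (flips (enum I) x) = (- maj I x)%R.
Proof.
rewrite /maj -sgrN -sumrN; congr Num.sg; apply: eq_bigr => j jI.
by rewrite flipsE ?enum_uniq // mem_enum jI pmN.
Qed.

Lemma maj_permx I (s : {perm 'I_n}) x :
  {mono s : j / j \in I} -> maj I (permx s x) = maj I x.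
Proof.
move=> sI; congr Num.sg; rewrite [RHS](reindex_inj (@perm_inj _ s)) /=.
by apply: eq_big => j; rewrite ?sI // ffunE.
Qed.

Lemma card_pivotal_maj_sum I :
  odd #|I| -> 2 ^ n <= \sum_(i in I) #|pivotal (maj I) i|.
Proof.
move=> oI; rewrite -big_enum; apply: leq_trans (card_disagree_flips_le _ _).
rewrite -card_cube -cardsT subset_leq_card //; apply/subsetP=> x _.
rewrite inE /= maj_flips_enum -addr_eq0 -mulr2n mulrn_eq0 /=.
exact: maj_neq0.
Qed.

Lemma card_pivotal_maj_eq I i i' :
  i \in I -> i' \in I -> #|pivotal (maj I) i'| = #|pivotal (maj I) i|.
Proof.
move=> iI i'I; rewrite -{1}(tpermL i i'); apply: card_pivotal_perm => x.
by apply: maj_permx => j; case: tpermP => // ->; rewrite iI i'I.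
Qed.

Lemma card_pivotal_maj_ge I i :
  odd #|I| -> i \in I -> 2 ^ n <= #|I| * #|pivotal (maj I) i|.
Proof.
move=> oI iI; rewrite -sum_nat_const; apply: leq_trans (card_pivotal_maj_sum oI) _.
by apply/eq_leq/eq_bigr => j jI; rewrite (card_pivotal_maj_eq iI jI).
Qed.

Lemma card_disagree_maj_ge I J :
  odd #|I| -> odd #|J| -> I != J -> 2 ^ n <= 2 * n * #|disagree (maj I) (maj J)|.
Proof.
wlog /subsetPn[i iI iJ] : I J / ~~ (I \subset J) => [hw oI oJ IJ|oI _ _].
  have [sIJ|nIJ] := boolP (I \subset J); last exact: hw nIJ oI oJ IJ.
  rewrite disagreeC; apply: hw; rewrite 1?eq_sym //.
  by apply: contra IJ => sJI; rewrite eqEsubset sIJ.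
apply: leq_trans (card_pivotal_maj_ge oI iI) _.
rewrite mulnAC mulnC leq_mul ?card_subset_ord ?card_pivotal_le_disagree // => x.
by rewrite maj_flip_notin.
Qed.

End Cube.

Lemma leq_bernoulli a d q : a ^ q.+1 + q.+1 * d * a ^ q <= (a + d) ^ q.+1.
Proof.
elim: q => [|q IH]; first by rewrite expn0 !expn1 mul1n muln1.
rewrite [(a + d) ^ q.+2]expnS; apply: leq_trans (leq_mul (leqnn _) IH).
rewrite mulnDl mulnDr !expnS; nia.
Qed.

Lemma expn_subn_half N d q :
  0 < q -> N <= q * d -> d <= N -> 2 * (N - d) ^ q <= N ^ q.
Proof.
case: q => // q _ hN hd; rewrite -{2}(subnK hd).
apply: leq_trans (leq_bernoulli _ _ _); rewrite mul2n -addnn leq_add2l expnS.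
by rewrite leq_mul2r (leq_trans (leq_subr _ _) hN) orbT.
Qed.

Lemma expn_subn_decay N d q k :
  0 < q -> N <= q * d -> d <= N -> 2 ^ k * (N - d) ^ (q * k) <= N ^ (q * k).
Proof.
move=> q0 hN hd; elim: k => [|k IH]; first by rewrite muln0.
rewrite mulnS !expnD expnS mulnACA.
exact: leq_mul (expn_subn_half q0 hN hd) IH.
Qed.

Lemma card_bigcup_le (I T : finType) (P : pred I) (F : I -> {set T}) :
  #|\bigcup_(i | P i) F i| <= \sum_(i | P i) #|F i|.
Proof.
apply: (big_ind2 (fun (A : {set T}) k => #|A| <= k)) => // [|A a B b hA hB].
  by rewrite cards0.
exact: leq_trans (leq_card_setU A B).1 (leq_add hA hB).
Qed.

Lemma card_tuples_in (T : finType) m (A : {set T}) :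
  #|[set xs : m.-tuple T | all [in A] xs]| <= #|A| ^ m.
Proof.
pose f (xs : m.-tuple T) : {ffun 'I_m -> T} := [ffun t => tnth xs t].
have f_inj : injective f.
  by move=> xs ys /ffunP e; apply: eq_from_tnth => t; have := e t; rewrite !ffunE.
rewrite -(card_imset _ f_inj) -[m in _ ^ m]card_ord -card_ffun_on subset_leq_card //.
apply/subsetP=> g /imsetP[xs]; rewrite inE => /all_tnthP xsA ->.
by apply/ffun_onP=> t; rewrite ffunE xsA.
Qed.

Definition consistent_majority : learner := fun n _ S =>
  if [pick J : {set 'I_n} | odd #|J| && all (fun p => maj J p.1 == p.2) S] is Some J
  then maj J else fun=> 0%R.

Definition exact_samples n (I : {set 'I_n}) m (A : seq (cube n * int) -> cube n -> int) :=
  [set xs : m.-tuple (cube n) | [forall x, A [seq (y, maj I y) | y <- xs] x == maj I x]].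

Lemma consistent_majority_miss n (I : {set 'I_n}) d m :
  odd #|I| -> ~: exact_samples I m (consistent_majority d) \subset
    \bigcup_(J : {set 'I_n} | odd #|J| && (J != I))
      [set xs : m.-tuple (cube n) | all [in ~: disagree (maj I) (maj J)] xs].
Proof.
move=> oI; apply/subsetP=> xs; rewrite !inE => /forallPn[x].
rewrite /consistent_majority; case: pickP => [J /andP[oJ xsJ]|none]; last first.
  have I_fits : all (fun p => maj I p.1 == p.2) [seq (y, maj I y) | y <- xs].
    by rewrite all_map; apply/allP=> y _ /=.
  by have := none I; rewrite oI I_fits.
have [-> | JI] := eqVneq J I; first by rewrite eqxx.
move=> _; apply/bigcupP; exists J; first by rewrite oJ JI.
rewrite inE; apply/allP=> y yxs; rewrite !inE negbK eq_sym.
by move: xsJ; rewrite all_map => /allP/(_ y yxs).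
Qed.

Lemma card_samples_avoiding_disagree n (I J : {set 'I_n}) L (m := 2 * n * (n + L)) :
  odd #|I| -> odd #|J| -> I != J ->
  2 ^ (n + L) * #|[set xs : m.-tuple (cube n) | all [in ~: disagree (maj I) (maj J)] xs]|
    <= (2 ^ n) ^ m.
Proof.
move=> oI oJ IJ; apply: leq_trans (leq_mul (leqnn _) (card_tuples_in _ _)) _.
rewrite cardsCs setCK card_cube /m; apply: expn_subn_decay.
- by rewrite muln_gt0 /= (leq_trans (odd_gt0 oI) (card_subset_ord I)).
- exact: card_disagree_maj_ge.
- by rewrite -card_cube max_card.
Qed.

Lemma card_exact_samples_compl n (I : {set 'I_n}) d L (m := 2 * n * (n + L)) :
  odd #|I| ->
  #|~: exact_samples I m (consistent_majority d)| * 2 ^ L <= #|{: m.-tuple (cube n)}|.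
Proof.
move=> oI; rewrite card_tuple card_cube -(@leq_pmul2l (2 ^ n)) ?expn_gt0 //.
rewrite mulnCA -expnD mulnC.
apply: leq_trans (leq_mul (leqnn _) (subset_leq_card (consistent_majority_miss d m oI))) _.
apply: leq_trans (leq_mul (leqnn _) (card_bigcup_le _ _)) _.
rewrite big_distrr /=.
apply: (@leq_trans (\sum_(J : {set 'I_n} | odd #|J| && (J != I)) (2 ^ n) ^ m)).
  by apply: leq_sum => J /andP[oJ JI]; rewrite card_samples_avoiding_disagree // eq_sym.
rewrite sum_nat_const leq_mul2r; apply/orP; right.
by rewrite -card_subsets max_card.
Qed.

Local Open Scope R_scope.

Definition up_inv (d : R) : nat := Z.to_nat (up (/ d)).

Lemma up_inv_bounds d : 0 < d -> / d <= INR (up_inv d) <= / d + 1.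
Proof.
move=> d_gt0; have [up_gt up_le] := archimed (/ d).
have inv_gt0 : 0 < / d by apply: Rinv_0_lt_compat.
have up_ge0 : Z.le 0 (up (/ d)) by apply: le_IZR; lra.
rewrite /up_inv INR_IZR_INZ Znat.Z2Nat.id //; lra.
Qed.

Definition sample_size (n : nat) (d : R) : nat := 2 * n * (n + up_inv d).

Lemma poly_sample_size_sample_size : poly_sample_size sample_size.
Proof.
exists 2%N, 2%N => n d d_gt0; have [_ up_le] := up_inv_bounds d_gt0.
have inv_gt0 : 0 < / d by apply: Rinv_0_lt_compat.
have n_ge0 := pos_INR n; have up_ge0 := pos_INR (up_inv d).
rewrite /sample_size -!multE -plusE !mult_INR plus_INR /=.
set a := INR n in n_ge0 *; set l := INR (up_inv d) in up_le up_ge0 *.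
set t := / d in inv_gt0 up_le *.
have sum_le : a + l <= (a + 1) * (1 + t) by nra.
nra.
Qed.

Lemma compl_ratio_ge (T : finType) (G : {set T}) (L : nat) d :
  (0 < #|T|)%N -> 0 < d -> / d <= INR L -> (#|~: G| * L <= #|T|)%N ->
  1 - d <= INR #|G| / INR #|T|.
Proof.
move=> T_gt0 d_gt0 inv_le bad_le.
have T_pos : 0 < INR #|T| by apply/lt_0_INR/ltP.
have split_T : INR #|G| + INR #|~: G| = INR #|T|.
  by rewrite -plus_INR; congr INR; exact: cardsC.
have bad_le' : INR #|~: G| * INR L <= INR #|T| by rewrite -mult_INR; apply/le_INR/leP.
have bad_ge0 := pos_INR #|~: G|.
have bad_d : INR #|~: G| <= d * INR #|T|.
  rewrite -[X in X <= _](@Rmult_1_l) -(Rinv_r d); last lra.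
  rewrite Rmult_assoc; apply: Rmult_le_compat_l; first lra.
  nra.
apply: (Rmult_le_reg_r (INR #|T|)) => //.
rewrite /Rdiv Rmult_assoc Rinv_l; lra.
Qed.

Local Close Scope R_scope.

Theorem theorem5p3 :
  exists (m : nat -> R -> nat) (L : learner),
    poly_sample_size m /\
    forall (n : nat) (I : {set 'I_n}), odd #|I| ->
    forall delta : R, Rlt R0 delta ->
      Rle (Rminus R1 delta) (success_prob I (m n delta) (L n delta)).
Proof.
exists sample_size, consistent_majority; split; first exact: poly_sample_size_sample_size.
move=> n I oI d d_gt0; have [inv_le _] := up_inv_bounds d_gt0.
apply: (compl_ratio_ge (L := up_inv d)) => //.
  by rewrite card_tuple card_cube !expn_gt0.
apply: leq_trans (card_exact_samples_compl d (up_inv d) oI).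
by rewrite leq_mul2l (ltnW (ltn_expl _ (ltnSn 1))) orbT.
Qed.
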